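(* Let $A$ be a ring, $W$ a multiplicative subset of $A$, $M$ a left $A$-module, $S \subseteq M$, and $T \subseteq A$. Then $[T]^W_A S \subseteq [TS]^W_M$. Moreover, if $T$ is contained in the center $Z(A)$ of $A$, then $[T]^W_A [S]^W_M \subseteq [TS]^W_M$.
   Context: Rings are unital, not necessarily commutative. For $T\subseteq A$ and a left $A$-module $N$, a $T$-factroid of $N$ is an additive subgroup $F$ of $N$ such that for all $x\in N$ and $t\in T$, $tx\in F$ implies $x\in F$; for $S\subseteq N$, $[S]^T_N$ is the smallest $T$-factroid of $N$ containing $S$ ($A$ itself is viewed as a left $A$-module). For subsets $X\subseteq A$, $Y\subseteq M$, $XY=\{xy\mid x\in X, y\in Y\}$. *)

From HB Require Import structures.
From mathcomp Require Import all_boot all_algebra.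
Set Implicit Arguments. Unset Strict Implicit. Unset Printing Implicit Defensive.
Import GRing.Theory.
Local Open Scope ring_scope.

Definition multiplicative_subset (A : pzRingType) (W : A -> Prop) : Prop :=
  W 1 /\ forall a b, W a -> W b -> W (a * b).

Definition factroid (A : pzRingType) (N : lmodType A) (T : A -> Prop)
  (F : N -> Prop) : Prop :=
  [/\ F 0, (forall x y, F x -> F y -> F (x - y))
    & (forall (t : A) (x : N), T t -> F (t *: x) -> F x)].

(* [S]^T_N : the smallest T-factroid of N containing S
   (intersection of all T-factroids containing S). *)
Definition factroid_gen (A : pzRingType) (N : lmodType A) (T : A -> Prop)
  (S : N -> Prop) : N -> Prop :=
  fun x => forall F : N -> Prop, factroid T F -> (forall s, S s -> F s) -> F x.

Definition setmul (A : pzRingType) (N : lmodType A) (X : A -> Prop)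
  (Y : N -> Prop) : N -> Prop :=
  fun m => exists x y, [/\ X x, Y y & m = x *: y].

Definition center (A : pzRingType) : A -> Prop :=
  fun z => forall a : A, z * a = a * z.

(* Factroids pull back along additive maps that commute with the action of W.
   For fixed x, the map a |-> a x from A to M is such a map, so if a W-factroid
   F of M contains T x, its preimage is a W-factroid of A containing T, hence
   containing [T]^W_A. If t is central, y |-> t y is such a map on M, so if F
   contains tS it contains t[S]^W_M. *)

From HB Require Import structures.
From mathcomp Require Import all_boot all_algebra.
Set Implicit Arguments. Unset Strict Implicit. Unset Printing Implicit Defensive.
Local Open Scope ring_scope.
Import GRing.Theory.

Section FactroidPreimage.

Variables (A : pzRingType) (W : A -> Prop) (N N' : lmodType A) (f : N -> N').
Hypothesis fB : forall x y, f (x - y) = f x - f y.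
Hypothesis fZ : forall w x, W w -> f (w *: x) = w *: f x.

Lemma factroid_preim (F : N' -> Prop) :
  factroid W F -> factroid W (fun x => F (f x)).
Proof.
have f0 : f 0 = 0 by rewrite -(subrr 0) fB subrr.
case=> F0 FB FW; split=> [|x y Fx Fy|w x Ww].
- by rewrite f0.
- by rewrite fB; apply: FB.
- by rewrite fZ //; apply: FW.
Qed.

Lemma factroid_gen_preim (S : N -> Prop) (F : N' -> Prop) x :
  factroid W F -> (forall s, S s -> F (f s)) -> factroid_gen W S x -> F (f x).
Proof. move=> FF SF Sx; exact: Sx _ (factroid_preim FF) SF. Qed.

End FactroidPreimage.

Section ScaleFactroidGen.

Variables (A : pzRingType) (W : A -> Prop) (M : lmodType A) (F : M -> Prop).
Hypothesis FF : factroid W F.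

Lemma factroid_gen_scalel (T : A -> Prop) (x : M) (a : A^o) :
  (forall t, T t -> F (t *: x)) -> factroid_gen (N := A^o) W T a -> F ((a : A) *: x).
Proof.
apply: (factroid_gen_preim (f := fun b : A^o => (b : A) *: x)) => //.
- by move=> b c; rewrite scalerBl.
- by move=> w b _; rewrite -scalerA.
Qed.

Lemma factroid_gen_scaler (S : M -> Prop) (t : A) (y : M) :
  (forall w, W w -> t * w = w * t) ->
  (forall s, S s -> F (t *: s)) -> factroid_gen W S y -> F (t *: y).
Proof.
move=> tW; apply: factroid_gen_preim => //.
- by move=> u v; rewrite scalerBr.
- by move=> w v Ww; rewrite !scalerA tW.
Qed.

End ScaleFactroidGen.

Theorem proposition5p7 (A : pzRingType) (W : A -> Prop) (M : lmodType A)
  (S : M -> Prop) (T : A -> Prop) :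
  multiplicative_subset W ->
  (forall m, setmul (A := A) (factroid_gen (N := A^o) W T) S m ->
             factroid_gen W (setmul T S) m) /\
  ((forall t, T t -> center t) ->
   forall m, setmul (A := A) (factroid_gen (N := A^o) W T) (factroid_gen W S) m ->
             factroid_gen W (setmul T S) m).
Proof.
move=> _.
have TS_in F t s : (forall m, setmul T S m -> F m) -> T t -> S s -> F (t *: s).
  by move=> TSF Tt Ss; apply: TSF; exists t, s.
split=> [m [a [s [Ta Ss ->]]] F FF TSF | Tcenter m [a [y [Ta Sy ->]]] F FF TSF].
- by apply: (factroid_gen_scalel FF _ Ta) => t Tt; apply: TS_in.
- apply: (factroid_gen_scalel FF _ Ta) => t Tt.
  apply: (factroid_gen_scaler FF _ _ Sy) => [w _|s Ss]; first exact: Tcenter.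
  exact: TS_in.
Qed.
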